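(* Let $X$ be a supertropical semiring. Let $n,j,i_1,\dots,i_j,d_1,\dots,d_j\in\mathbb{N}_{\ge1}$ with $i_1<i_2<\dots<i_j\le n$ and $d_1>d_2>\dots>d_j$, and set $i_0=0$. Then for all $x_1,\dots,x_n\in X$, $$\mathrm{Minsym}_n\Big(\prod_{t=1}^{j}(x_{i_{t-1}+1}\cdots x_{i_t})^{d_t}\Big)=e_{i_j}(x_1,\dots,x_n)^{d_j}\cdot\mathrm{Minsym}_n\Big(\prod_{t=1}^{j-1}(x_{i_{t-1}+1}\cdots x_{i_t})^{d_t-d_j}\Big).$$
   Context: A semiring $(X,+,0,\cdot)$: $(X,+,0)$ commutative monoid, $(X,\cdot)$ semigroup, distributivity, $0$ absorbing. $\nu(x)=x+x$. A supertropical semiring is a unital commutative semiring with $2=4$ (where $n=1+\dots+1$), such that $a+b\in\{a,b\}$ whenever $\nu(a)\ne\nu(b)$, and $a+b=\nu(a)$ whenever $\nu(a)=\nu(b)$. For a pure monomial $m=x_1^{c_1}\cdots x_n^{c_n}$ (coefficient $1$), its minimal symmetrization $\mathrm{Minsym}_n(m)$ is the sum, with each term taken exactly once, of the distinct monomials in $\{x_{\sigma(1)}^{c_1}\cdots x_{\sigma(n)}^{c_n}:\sigma\in S_n\}$ (monomials equal up to reordering of factors are identified); the minimal symmetrization of the empty monomial is $1$. $e_k(x_1,\dots,x_n)$ is the sum of all products of $k$ distinct variables. *)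

From HB Require Import structures.
From mathcomp Require Import all_boot all_order all_fingroup all_algebra.
Set Implicit Arguments. Unset Strict Implicit. Unset Printing Implicit Defensive.
Import GRing.Theory.
Local Open Scope ring_scope.

Definition nu (X : comPzSemiRingType) (x : X) : X := x + x.

Definition supertropical (X : comPzSemiRingType) : Prop :=
  [/\ (2%:R : X) = 4%:R,
      (forall a b : X, nu a <> nu b -> a + b = a \/ a + b = b) &
      (forall a b : X, nu a = nu b -> a + b = nu a)].

Definition monom (X : comPzSemiRingType) (n : nat) (c : {ffun 'I_n -> nat})
  (x : 'I_n -> X) : X := \prod_(k < n) x k ^+ c k.

(* Minimal symmetrization: sum, each taken once, of the distinct monomials
   x_{s(1)}^{c_1} ... x_{s(n)}^{c_n}, s in S_n; the exponent of x_k in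
   that monomial is c_{s^-1(k)}. *)
Definition Minsym (X : comPzSemiRingType) (n : nat) (c : {ffun 'I_n -> nat})
  (x : 'I_n -> X) : X :=
  \sum_(e <- undup [seq [ffun k => c ((s^-1)%g k)] | s : {perm 'I_n}])
     monom e x.

Definition elem_sym (X : comPzSemiRingType) (n k : nat) (x : 'I_n -> X) : X :=
  \sum_(S : {set 'I_n} | #|S| == k) \prod_(m in S) x m.

(* Exponent vector of prod_{t=1}^{j} (x_{i_{t-1}+1} ... x_{i_t})^{d_t}
   (variables 0-indexed: x_{k+1} is x k, so x_{k+1} lies in block t iff
   i_{t-1} <= k < i_t). *)
Definition block_exp (n j : nat) (i d : nat -> nat) : {ffun 'I_n -> nat} :=
  [ffun k : 'I_n => (\sum_(1 <= t < j.+1 | (i t.-1 <= k < i t)%N) d t)%N].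

(* The theorem is d_j applications of one identity, valid for every exponent
   vector c whose support has r elements:
     Minsym(c) = e_r * Minsym(c'),   c' = c - 1 on the support of c.
   Expanding the right-hand side gives one monomial x^(1_T + v) for every
   r-set T and every rearrangement v of c'.  The terms with supp v ⊆ T are
   exactly the rearrangements of c, each met once.  Every other term is
   absorbed by Minsym(c) (s + t = s): pick k in supp v \ T and l in T \ supp v;
   moving the unit of T from l to k, or swapping v_k and v_l, gives two
   distinct terms with exponents (v_k + 1, 0) and (0, v_k + 1) at (k, l), where
   the given term has (v_k, 1) and agrees with both elsewhere.  In a
   supertropical semiring y^(p+q) + z^(p+q) absorbs y^p z^q for p, q >= 1, and
   by induction on |supp v \ T| each of the two new terms is a rearrangement
   of c or is itself absorbed.  The block exponent of the theorem is >= d_j on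
   x_1, ..., x_(i_j) and zero elsewhere, so the identity applies d_j times. *)

From HB Require Import structures.
From mathcomp Require Import all_boot all_order all_fingroup all_algebra.
From mathcomp Require Import zify.
Set Implicit Arguments. Unset Strict Implicit. Unset Printing Implicit Defensive.
Import GRing.Theory.
Local Open Scope ring_scope.

Definition absorbs (X : nmodType) (s t : X) : Prop := s + t = s.

Section Absorption.
Variable X : nmodType.
Implicit Types s t u : X.

Lemma absorbs_trans s t u : absorbs s t -> absorbs t u -> absorbs s u.
Proof. by rewrite /absorbs => st tu; rewrite -st -addrA tu. Qed.

Lemma absorbs_addl r s t : absorbs s t -> absorbs (r + s) t.
Proof. by rewrite /absorbs => st; rewrite -addrA st. Qed.

Lemma absorbs_sum (I : eqType) (r : seq I) (P : pred I) (F : I -> X) s :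
  (forall i, i \in r -> P i -> absorbs s (F i)) ->
  absorbs s (\sum_(i <- r | P i) F i).
Proof.
elim: r => [|i r IHr] sF; first by rewrite big_nil /absorbs addr0.
rewrite big_cons; have sFr := IHr (fun k kr => sF k (mem_behead (s := i :: r) kr)).
by case: ifP => // Pi; rewrite /absorbs addrA sF ?mem_head.
Qed.

Lemma absorbs_pair (I : eqType) (r : seq I) (F : I -> X) a b t :
  uniq r -> a != b ->
  a \in r \/ absorbs (\sum_(i <- r) F i) (F a) ->
  b \in r \/ absorbs (\sum_(i <- r) F i) (F b) ->
  absorbs (F a + F b) t -> absorbs (\sum_(i <- r) F i) t.
Proof.
set S := \sum_(i <- r) F i => r_uniq ab ha hb abt.
suff [R ->] : exists R, S = F a + F b + R by rewrite /absorbs addrAC abt.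
case: ha => [ar|Sa]; case: hb => [br|Sb].
- exists (\sum_(i <- [seq i <- r | i != a] | i != b) F i).
  rewrite /S (bigD1_seq a) // -big_filter (bigD1_seq b) ?filter_uniq //.
    exact: addrA.
  by rewrite mem_filter eq_sym ab.
- by exists (\sum_(i <- r | i != a) F i); rewrite -[LHS]Sb {1}/S (bigD1_seq a) // addrAC.
- exists (\sum_(i <- r | i != b) F i).
  by rewrite -[LHS]Sa {1}/S (bigD1_seq b) //= addrAC [F a + _]addrC.
- by exists S; rewrite -{1}Sb -{1}Sa [RHS]addrC addrA.
Qed.

Lemma big_absorb (I J : eqType) (F : I -> X) (r : seq I) (q : seq J) (f : J -> I) :
  uniq r -> uniq q ->
  {in q &, forall j1 j2, f j1 \in r -> f j1 = f j2 -> j1 = j2} ->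
  {subset r <= map f q} ->
  (forall j, j \in q -> f j \notin r -> absorbs (\sum_(i <- r) F i) (F (f j))) ->
  \sum_(j <- q) F (f j) = \sum_(i <- r) F i.
Proof.
move=> r_uniq q_uniq f_inj f_onto f_absorb.
rewrite (bigID (fun j => f j \in r)) /=.
have -> : \sum_(j <- q | f j \in r) F (f j) = \sum_(i <- r) F i.
  rewrite -big_filter -(big_map f predT F); apply: perm_big.
  apply: uniq_perm _ r_uniq _.
    rewrite map_inj_in_uniq ?filter_uniq // => j1 j2.
    by rewrite !mem_filter => /andP[fj1 j1q] /andP[_ j2q]; apply: f_inj.
  move=> i; apply/mapP/idP => [[j] | ir].
    by rewrite mem_filter => /andP[? _] ->.
  by have /mapP[j jq fj] := f_onto i ir; exists j; rewrite // mem_filter -fj ir.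
by apply: absorbs_sum => j; apply: f_absorb.
Qed.

End Absorption.

Lemma absorbs_mull (R : pzSemiRingType) (m s t : R) :
  absorbs s t -> absorbs (m * s) (m * t).
Proof. by rewrite /absorbs => st; rewrite -mulrDr st. Qed.

Section Supertropical.
Variable X : comPzSemiRingType.
Implicit Types a b y z : X.

Lemma absorbs_mixed_expr y z p q : absorbs z y -> (0 < p)%N ->
  absorbs (z ^+ (p + q)) (y ^+ p * z ^+ q).
Proof.
rewrite /absorbs => zy; case: p => // p _; elim: p q => [|p IHp] q.
  by rewrite add1n exprS expr1 -mulrDl zy.
apply: absorbs_trans (_ : absorbs _ (y ^+ p.+1 * z ^+ q.+1)) _.
  by rewrite addSnnS; apply: IHp.
have -> : y ^+ p.+2 * z ^+ q = y ^+ p.+1 * z ^+ q * y by rewrite exprSr mulrAC.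
by rewrite [z ^+ q.+1]exprSr mulrA /absorbs -mulrDr zy.
Qed.

Lemma nuMl a b : nu (a * b) = nu a * b. Proof. exact/esym/mulrDl. Qed.

Lemma nuMr a b : nu (a * b) = a * nu b. Proof. exact/esym/mulrDr. Qed.

Lemma nu_exprMn y z p q : nu y = nu z -> nu (y ^+ p * z ^+ q) = nu (y ^+ (p + q)).
Proof.
move=> yz; elim: q => [|q IHq]; first by rewrite expr0 mulr1 addn0.
by rewrite exprSr mulrA nuMl IHq -nuMl nuMr -yz -nuMr -exprSr addnS.
Qed.

Hypothesis HX : supertropical X.

Lemma nu_idem a : nu (nu a) = nu a.
Proof.
case: HX => two_eq_four _ _.
rewrite /nu -mulr2n -mulr2n -mulrnA.
have -> : a *+ (2 * 2) = a * 4%:R by rewrite mulr_natr.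
by rewrite -two_eq_four mulr_natr.
Qed.

Lemma absorbs_ghost a b : nu a = nu b -> absorbs (nu a) b.
Proof. by case: HX => _ _ nu_eq ab; rewrite /absorbs nu_eq nu_idem. Qed.

Lemma supertropical_absorbs_mixed_expr y z p q : (0 < p)%N -> (0 < q)%N ->
  absorbs (y ^+ (p + q) + z ^+ (p + q)) (y ^+ p * z ^+ q).
Proof.
case: HX => _ nu_neq nu_eq p_gt0 q_gt0.
have [yz | yz] := eqVneq (nu y) (nu z).
  have := nu_exprMn 0 (p + q) yz; rewrite expr0 mul1r add0n => nuN.
  rewrite [_ + _]nu_eq -?nuN //; apply: absorbs_ghost.
  by rewrite nu_exprMn.
have [y_abs | z_abs] := nu_neq y z (elimN eqP yz).
  by rewrite addrC mulrC addnC; apply/absorbs_addl/absorbs_mixed_expr.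
by apply/absorbs_addl/absorbs_mixed_expr; rewrite // /absorbs addrC.
Qed.

End Supertropical.

Lemma perm_codom_comp (T : finType) (T' : eqType) (f : T -> T') (p : {perm T}) :
  perm_eq (codom (f \o p)) (codom f).
Proof.
rewrite !codomE map_comp; apply: perm_map.
apply: uniq_perm; last by move=> t; rewrite -codomE perm_onto mem_enum.
  by rewrite map_inj_uniq ?enum_uniq //; apply: perm_inj.
exact: enum_uniq.
Qed.

Lemma count_codom (T : finType) (a : pred nat) (f : T -> nat) :
  count a (codom f) = (\sum_(t : T) a (f t))%N.
Proof. by rewrite codomE count_map -sum1_count big_enum_cond big_mkcond. Qed.

Section ExponentVectors.
Variable n : nat.
Local Notation vec := {ffun 'I_n -> nat}.
Implicit Types (c u v : vec) (T : {set 'I_n}).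

Definition exp_orbit c : seq vec :=
  undup [seq [ffun k => c ((s^-1)%g k)] | s : {perm 'I_n}].
Definition exp_supp u : {set 'I_n} := [set m | u m != 0%N].
Definition incr_on T u : vec := [ffun m => u m + (m \in T)]%N.
Definition decr u : vec := [ffun m => (u m).-1].

Lemma mem_exp_orbit u c : (u \in exp_orbit c) = perm_eq (codom u) (codom c).
Proof.
apply/idP/idP => [|u_c].
  rewrite mem_undup => /mapP[s _ ->].
  by rewrite (eq_codom (g := c \o (s^-1)%g)) ?perm_codom_comp // => k; rewrite ffunE.
have /tuple_permP[p u_p] : perm_eq (codom u) [tuple c k | k < n].
  by rewrite /= -val_ord_tuple -codomE.
rewrite mem_undup; apply/mapP; exists (p^-1)%g; rewrite ?mem_enum //.
apply/ffunP => k; rewrite ffunE invgK.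
have /eq_in_map : codom u = map (c \o p) (enum 'I_n).
  by rewrite u_p /= -val_ord_tuple; apply: eq_map => i; rewrite /= tnth_mktuple.
by apply; rewrite mem_enum.
Qed.

Lemma exp_orbit_comp_perm v c (p : {perm 'I_n}) :
  v \in exp_orbit c -> [ffun m => v (p m)] \in exp_orbit c.
Proof.
rewrite !mem_exp_orbit; apply: perm_trans.
by rewrite (eq_codom (g := v \o p)) ?perm_codom_comp // => k; rewrite ffunE.
Qed.

Lemma card_exp_supp u : #|exp_supp u| = count (predC1 0%N) (codom u).
Proof. by rewrite count_codom -sum1_card big_mkcond; apply: eq_bigr => m; rewrite inE. Qed.

Lemma card_exp_supp_orbit u c : u \in exp_orbit c -> #|exp_supp u| = #|exp_supp c|.
Proof. by rewrite mem_exp_orbit !card_exp_supp => /seq.permP ->. Qed.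

Lemma decr_orbit u c : u \in exp_orbit c -> decr u \in exp_orbit (decr c).
Proof.
have codom_decr w : codom (decr w) = map predn (codom w).
  by rewrite !codomE -map_comp; apply: eq_map => m; rewrite /= ffunE.
by rewrite !mem_exp_orbit !codom_decr; apply: perm_map.
Qed.

Lemma incr_on_decr c : incr_on (exp_supp c) (decr c) = c.
Proof. by apply/ffunP => m; rewrite !ffunE inE; case: (c m) => // k; rewrite addn1. Qed.

Lemma exp_supp_decr c : exp_supp (decr c) \subset exp_supp c.
Proof. by apply/subsetP => m; rewrite !inE ffunE; case: (c m). Qed.

Lemma subset_exp_supp_incr_on T u : T \subset exp_supp (incr_on T u).
Proof. by apply/subsetP => m mT; rewrite inE ffunE mT addn1. Qed.

Lemma incr_on_inj T : injective (incr_on T).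
Proof. by move=> u1 u2 /ffunP e; apply/ffunP => m; have := e m; rewrite !ffunE => /addIn. Qed.

Lemma count_codom_incr_on (a : pred nat) T u : exp_supp u \subset T ->
  (count a (codom (incr_on T u)) + #|~: T| * a 1%N
   = count (a \o succn) (codom u) + #|~: T| * a 0%N)%N.
Proof.
move=> /subsetP uT; have u0 m : m \notin T -> u m = 0%N.
  by move=> mT; apply/eqP; apply: contraNT mT => um; apply: uT; rewrite inE.
have cardC (b : bool) : (\sum_(m < n | m \notin T) b = #|~: T| * b)%N.
  by rewrite sum_nat_const; congr (_ * _)%N; apply: eq_card => m; rewrite inE.
rewrite !count_codom (bigID (mem T)) [in RHS](bigID (mem T)) /=.
have -> : (\sum_(m in T) a (incr_on T u m) = \sum_(m in T) a (u m).+1)%N.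
  by apply: eq_bigr => m mT; rewrite ffunE mT addn1.
have -> : (\sum_(m < n | m \notin T) a (incr_on T u m) = #|~: T| * a 0%N)%N.
  by rewrite -cardC; apply: eq_bigr => m mT; rewrite ffunE (negbTE mT) u0.
have -> : (\sum_(m < n | m \notin T) a (u m).+1 = #|~: T| * a 1%N)%N.
  by rewrite -cardC; apply: eq_bigr => m mT; rewrite u0.
by rewrite addnAC.
Qed.

Lemma perm_codom_incr_on T1 T2 u1 u2 :
  exp_supp u1 \subset T1 -> exp_supp u2 \subset T2 -> #|T1| = #|T2| ->
  perm_eq (codom u1) (codom u2) ->
  perm_eq (codom (incr_on T1 u1)) (codom (incr_on T2 u2)).
Proof.
move=> uT1 uT2 T12 /seq.permP u12; apply/seq.permP => a.
have C12 : #|~: T1| = #|~: T2|.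
  by apply/eqP; rewrite -(eqn_add2l #|T1|) {2}T12 !cardsC.
apply: (@addIn (#|~: T1| * a 1%N)).
by rewrite count_codom_incr_on // C12 u12 -count_codom_incr_on.
Qed.

Lemma incr_on_orbit T v c : #|T| = #|exp_supp c| ->
  v \in exp_orbit (decr c) -> exp_supp v \subset T -> incr_on T v \in exp_orbit c.
Proof.
move=> Tc; rewrite !mem_exp_orbit => v_c vT; rewrite -(incr_on_decr c).
exact: perm_codom_incr_on (exp_supp_decr c) Tc v_c.
Qed.

End ExponentVectors.

Section KeyIdentity.
Variable X : comPzSemiRingType.
Hypothesis HX : supertropical X.
Variables (n : nat) (x : 'I_n -> X).
Local Notation vec := {ffun 'I_n -> nat}.
Implicit Types (c u v w : vec) (T : {set 'I_n}).

Lemma Minsym_orbit c : Minsym c x = \sum_(u <- exp_orbit c) monom u x.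
Proof. by []. Qed.

Lemma monom_incr_on T u : monom (incr_on T u) x = (\prod_(m in T) x m) * monom u x.
Proof.
rewrite /monom [\prod_(m in T) _]big_mkcond -big_split; apply: eq_bigr => m _.
by rewrite ffunE exprD mulrC; case: (m \in T); rewrite ?expr1 ?expr0.
Qed.

Lemma monom_split_pair u k l : k != l ->
  monom u x = x k ^+ u k * x l ^+ u l * \prod_(m < n | (m != k) && (m != l)) x m ^+ u m.
Proof. by move=> kl; rewrite /monom (bigD1 k) // (bigD1 l) 1?eq_sym //= mulrA. Qed.

Lemma absorbs_exchange u w1 w2 k l : k != l -> (0 < u k)%N -> (0 < u l)%N ->
  [/\ w1 k = (u k + u l)%N, w1 l = 0%N, w2 k = 0%N & w2 l = (u k + u l)%N] ->
  (forall m, m != k -> m != l -> w1 m = u m /\ w2 m = u m) ->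
  absorbs (monom w1 x + monom w2 x) (monom u x).
Proof.
move=> kl uk_gt0 ul_gt0 [w1k w1l w2k w2l] w_u.
have rest w : (forall m, m != k -> m != l -> w m = u m) ->
    \prod_(m < n | (m != k) && (m != l)) x m ^+ w m
    = \prod_(m < n | (m != k) && (m != l)) x m ^+ u m.
  by move=> wu; apply: eq_bigr => m /andP[mk ml]; rewrite wu.
rewrite !(monom_split_pair _ kl) !rest => [|m mk ml|m mk ml]; try by case: (w_u m mk ml).
rewrite w1k w1l w2k w2l !expr0 mulr1 mul1r -mulrDl ![_ * \prod_(_ < _ | _) _]mulrC.
exact/absorbs_mull/supertropical_absorbs_mixed_expr.
Qed.

Lemma orbit_or_absorbed c T v : #|T| = #|exp_supp c| -> v \in exp_orbit (decr c) ->
  incr_on T v \in exp_orbit c \/ absorbs (Minsym c x) (monom (incr_on T v) x).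
Proof.
have [N] := ubnP #|exp_supp v :\: T|; elim: N T v => // N IHN T v ltN Tc vc.
have [vT | /subsetPn[k kv kT]] := boolP (exp_supp v \subset T).
  by left; apply: incr_on_orbit.
right; have /subsetPn[l lT lv] : ~~ (T \subset exp_supp v).
  apply: contraNN kT => Tv; suff /eqP -> : T == exp_supp v by [].
  rewrite eqEcard Tv (card_exp_supp_orbit vc) Tc.
  exact/subset_leq_card/exp_supp_decr.
have kl : k != l by apply: contraNneq kT => ->.
have vl : v l = 0%N by apply/eqP; rewrite inE negbK in lv.
have vk : (0 < v k)%N by rewrite lt0n; rewrite inE in kv.
pose T' := k |: T :\ l; pose v' := [ffun m => v (tperm k l m)].
have T'c : #|T'| = #|exp_supp c|.
  by rewrite -Tc cardsU1 in_setD1 (negbTE kT) andbF (cardsD1 l T) lT.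
have shrink S : S = (exp_supp v :\: T) :\ k -> (#|S| < N)%N.
  by move=> ->; move: ltN; rewrite (cardsD1 k (exp_supp v :\: T)) inE kT kv.
have IHT' := IHN T' v (shrink _ _) T'c vc.
have IHv' := IHN T v' (shrink _ _) Tc (exp_orbit_comp_perm (tperm k l) vc).
rewrite Minsym_orbit; apply: (absorbs_pair (undup_uniq _) _ (IHT' _) (IHv' _)).
- apply/eqP => /ffunP/(_ l); rewrite !ffunE tpermR vl !inE eqxx lT eq_sym (negbTE kl).
  by rewrite addn1.
- apply/setP => m; rewrite !inE.
  have [->|mk] := eqVneq m k; rewrite ?eqxx //=.
  by have [->|ml] := eqVneq m l; rewrite ?eqxx ?vl ?lT ?andbF.
- apply/setP => m; rewrite !inE ffunE.
  case: tpermP => [->|->|/eqP mk _]; rewrite ?eqxx ?vl ?lT ?andbF //.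
  by rewrite (negbTE mk).
apply: (absorbs_exchange kl).
- by rewrite ffunE (negbTE kT) addn0.
- by rewrite ffunE lT addn1.
- rewrite !ffunE tpermL tpermR vl !inE eqxx lT (negbTE kT) [l == k]eq_sym (negbTE kl) eqxx /=.
  by split; rewrite ?addn0.
by move=> m mk ml; rewrite !ffunE tpermD 1?eq_sym // !inE (negbTE mk) (negbTE ml).
Qed.

Lemma Minsym_decr c : Minsym c x = elem_sym #|exp_supp c| x * Minsym (decr c) x.
Proof.
set r := #|exp_supp c|; pose P := [pred T : {set 'I_n} | #|T| == r].
have -> : elem_sym r x = \sum_(T <- enum P) \prod_(m in T) x m by rewrite big_enum.
rewrite mulr_suml Minsym_orbit; apply/esym.
set Q := [seq (T, v) | T <- enum P, v <- exp_orbit (decr c)].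
have -> : \sum_(T <- enum P) (\prod_(m in T) x m) * Minsym (decr c) x
    = \sum_(q <- Q) monom (incr_on q.1 q.2) x.
  rewrite big_allpairs; apply: eq_bigr => T _; rewrite Minsym_orbit mulr_sumr.
  by apply: eq_bigr => v _; rewrite monom_incr_on.
have memQ q : q \in Q -> #|q.1| = r /\ q.2 \in exp_orbit (decr c).
  by case/allpairsP => -[T v] /= [+ vc ->]; rewrite mem_enum => /eqP.
apply: (big_absorb (f := fun q => incr_on q.1 q.2)) => [||[T1 v1] [T2 v2]|u uc|q qQ].
- exact: undup_uniq.
- by apply: allpairs_uniq; rewrite ?enum_uniq ?undup_uniq // => -[? ?] [? ?].
- move=> /memQ[/= T1c _] /memQ[/= T2c _] /= uc e12.
  have T_supp T v : #|T| = r -> incr_on T v \in exp_orbit c -> T = exp_supp (incr_on T v).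
    move=> Tc vc; apply/eqP; rewrite eqEcard subset_exp_supp_incr_on.
    by rewrite (card_exp_supp_orbit vc) -/r Tc leqnn.
  have T12 : T1 = T2.
    by rewrite (T_supp _ _ T1c uc) e12 -T_supp // -e12.
  by move: e12; rewrite T12 => /incr_on_inj ->.
- apply/mapP; exists (exp_supp u, decr u); last by rewrite incr_on_decr.
  by apply: allpairs_f; rewrite ?mem_enum ?inE ?(card_exp_supp_orbit uc) ?decr_orbit.
have [Tc vc] := memQ q qQ.
by case: (orbit_or_absorbed Tc vc) => // /[swap] /negP.
Qed.

Lemma Minsym_decr_iter c (S : {set 'I_n}) m : (forall k, k \in S -> m <= c k)%N ->
  (forall k, k \notin S -> c k = 0%N) ->
  Minsym c x = elem_sym #|S| x ^+ m * Minsym [ffun k => c k - m]%N x.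
Proof.
move=> c_ge c0; elim: m c_ge => [|m IHm] c_ge.
  by rewrite expr0 mul1r; congr Minsym; apply/ffunP => k; rewrite ffunE subn0.
rewrite IHm => [|k /c_ge /ltnW //]; rewrite Minsym_decr.
have -> : exp_supp [ffun k => c k - m]%N = S.
  apply/setP => k; rewrite inE ffunE; have [kS | kS] := boolP (k \in S).
    by rewrite subn_eq0 -ltnNge c_ge.
  by rewrite c0.
have -> : decr [ffun k => c k - m]%N = [ffun k => c k - m.+1]%N.
  by apply/ffunP => k; rewrite !ffunE subnS.
by rewrite exprSr mulrA.
Qed.

End KeyIdentity.

Section Blocks.
Local Open Scope nat_scope.
Variables (j : nat) (i : nat -> nat).
Hypotheses (i0 : i 0 = 0) (i_step : forall t, t < j -> i t < i t.+1).

Let le_j_convex : {in [pred t | t <= j] &, forall a b c, a < c < b -> c <= j}.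
Proof. by move=> a b _ bj c /andP[_ /ltnW/leq_trans]; apply. Qed.

Lemma block_bound_le : {in [pred t | t <= j] &, {homo i : t1 t2 / t1 <= t2}}.
Proof. by apply: homo_leq_in leqnn leq_trans le_j_convex _ => t _ /i_step/ltnW. Qed.

Lemma block_index k : k < i j ->
  exists2 t0, 0 < t0 <= j & forall t, 0 < t <= j -> (i t.-1 <= k < i t) = (t == t0).
Proof.
move=> kj; have ex_t : exists t, k < i t by exists j.
case: (ex_minnP ex_t) => t0 kt0 t0_min; have t0j := t0_min j kj.
have t0_gt0 : 0 < t0 by case: t0 kt0 {t0_min t0j} => //; rewrite i0.
have it0 : i t0.-1 <= k.
  by rewrite leqNgt; apply/negP => /t0_min; rewrite -ltnS prednK // ltnn.
exists t0; rewrite ?t0_gt0 // => t /andP[t_gt0 tj].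
have [lt_tt0 | lt_t0t | ->] := ltngtP t t0; last by rewrite it0 kt0.
  have le_t_t0 : t <= t0.-1 by rewrite -ltnS prednK.
  rewrite ltnNge (leq_trans (block_bound_le _ _ le_t_t0) it0) ?andbF //.
  by rewrite inE (leq_trans (leq_pred t0)).
have le_t0_t : t0 <= t.-1 by rewrite -ltnS prednK.
rewrite leqNgt (leq_trans kt0 (block_bound_le _ _ le_t0_t)) //.
by rewrite inE (leq_trans (leq_pred t)).
Qed.

Lemma block_exp_lt n (k : 'I_n) : k < i j -> exists2 t0, 0 < t0 <= j &
  forall J (d : nat -> nat), J <= j -> block_exp n J i d k = if t0 <= J then d t0 else 0.
Proof.
case/block_index => t0 t0j blk; exists t0 => // J d Jj.
rewrite ffunE big_nat_cond (eq_bigl (fun t => (0 < t < J.+1) && (t == t0))) => [|t].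
  by rewrite -big_nat_cond big_nat1_eq ltnS; case/andP: t0j => ->.
case/boolP: (0 < t < J.+1) => //= /andP[t_gt0 tJ].
by apply: blk; rewrite t_gt0 (leq_trans (tJ : t <= J) Jj).
Qed.

Lemma block_exp_ge n J (d : nat -> nat) (k : 'I_n) :
  J <= j -> i j <= k -> block_exp n J i d k = 0.
Proof.
move=> Jj jk; rewrite ffunE big1_seq // => t /andP[/andP[_ kt]].
rewrite mem_index_iota ltnS => /andP[_ tJ]; have tj := leq_trans tJ Jj.
by have := leq_trans kt (leq_trans (block_bound_le tj (leqnn j) tj) jk); rewrite ltnn.
Qed.

End Blocks.

Lemma card_ord_lt m n : (m <= n)%N -> #|[set k : 'I_n | (k < m)%N]| = m.
Proof.
move=> mn; have -> : [set k : 'I_n | (k < m)%N] = widen_ord mn @: [set: 'I_m].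
  apply/setP => k; rewrite inE; apply/idP/imsetP => [km | [a _ ->]].
    by exists (Ordinal km); last apply: val_inj.
  exact: (ltn_ord a).
rewrite card_imset ?cardsT ?card_ord //.
by move=> a b [] /val_inj.
Qed.

Lemma leq_last_decreasing (d : nat -> nat) j :
  (forall t, 0 < t < j -> d t.+1 < d t)%N -> forall t, (0 < t <= j)%N -> (d j <= d t)%N.
Proof.
move=> d_step t /andP[t_gt0 tj].
have d_anti : {in [pred s | 0 < s <= j] &, {homo d : a b / a <= b >-> b <= a}}%N.
  apply: homo_leq_in => [//|y a b ya yb|a b|s]; first exact: leq_trans yb ya.
    by move=> /andP[a_gt0 _] /andP[_ bj] c /andP[ac cb]; apply/andP; lia.
  by move=> /andP[s_gt0 _] /andP[_ sj]; apply/ltnW/d_step; lia.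
by apply: d_anti; rewrite ?inE ?t_gt0 ?leqnn //=; lia.
Qed.

Theorem lemma5p7 (X : comPzSemiRingType) (HX : supertropical X)
  (n j : nat) (i d : nat -> nat)
  (hn : (1 <= n)%N) (hj : (1 <= j)%N)
  (hi0 : i 0%N = 0%N)
  (hi1 : forall t, (1 <= t <= j)%N -> (1 <= i t)%N)
  (hd1 : forall t, (1 <= t <= j)%N -> (1 <= d t)%N)
  (hinc : forall t, (1 <= t < j)%N -> (i t < i t.+1)%N)
  (hij : (i j <= n)%N)
  (hdec : forall t, (1 <= t < j)%N -> (d t.+1 < d t)%N)
  (x : 'I_n -> X) :
  Minsym (block_exp n j i d) x =
  elem_sym (i j) x ^+ d j *
    Minsym (block_exp n j.-1 i (fun t => (d t - d j)%N)) x.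
Proof.
have i_step t : (t < j)%N -> (i t < i t.+1)%N.
  by case: t => [|t] tj; [rewrite hi0; apply: hi1 | apply: hinc]; lia.
rewrite -(card_ord_lt hij).
rewrite (Minsym_decr_iter HX x (S := [set k : 'I_n | (k < i j)%N]) (m := d j)) => [|k|k];
  rewrite ?inE.
- congr (_ * Minsym _ x); apply/ffunP => k; rewrite ffunE.
  have [kj | jk] := ltnP k (i j); last by rewrite !(block_exp_ge i_step) ?leq_pred.
  have [t0 t0j blk] := block_exp_lt hi0 i_step kj.
  case/andP: t0j => _ t0j; rewrite !blk ?leq_pred // t0j.
  by case: leqP => // lt_j1_t0; rewrite (_ : t0 = j) ?subnn //; lia.
- case/(block_exp_lt hi0 i_step) => t0 t0j ->; rewrite // (andP t0j).2.
  exact: leq_last_decreasing hdec _ t0j.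
- by rewrite -leqNgt => /(block_exp_ge i_step) ->.
Qed.
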